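(* Let $a=(a_{31}a_{30}\cdots a_{0})_2$ be an IEEE 754 \textbf{binary32} (normalized) floating-point number, so that $$a=(-1)^{a_{31}}\times 2^{(a_{30}a_{29}\cdots a_{23})_2-127}\times\Big(1+\sum_{i=1}^{23}a_{23-i}2^{-i}\Big).$$ Let $p\in[0,1]$, and let $\tilde a$ be the number obtained from $a$ by keeping the sign bit $a_{31}$ and the exponent bits $a_{30},\dots,a_{23}$ unchanged and flipping each of the 23 fraction bits $a_{22},\dots,a_0$ independently with probability $p$. Then the mean of the decimal value of $\tilde a$ is $$\mathbb{E}(\tilde a)=(1-2p)\,a+(-1)^{a_{31}}\,2^{(a_{30}a_{29}\cdots a_{23})_2-127}\Big(2p+\sum_{i=1}^{23}2^{-i}p\Big),$$ and its variance is $$\mathrm{Var}(\tilde a)=\frac{1-4^{-23}}{3}\,p(1-p)\,2^{2(a_{30}a_{29}\cdots a_{23})_2-254}.$$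
   Context: $(b_k\cdots b_0)_2$ denotes the nonnegative integer (or, after a binary point, the binary fraction) with binary digits $b_k,\dots,b_0$. In \textbf{binary32}, $a_{31}$ is the sign bit, $a_{30}\cdots a_{23}$ are the 8 exponent bits and $a_{22}\cdots a_0$ are the 23 fraction bits, with an implicit leading 1 before the binary point. *)

From HB Require Import structures.
From mathcomp Require Import all_boot all_order all_algebra.
Set Implicit Arguments. Unset Strict Implicit. Unset Printing Implicit Defensive.
Import Order.TTheory GRing.Theory Num.Theory.
Local Open Scope ring_scope.

(* A binary32 word: bits a_0 .. a_31 (a_31 sign, a_30..a_23 exponent, a_22..a_0 fraction). *)
Definition bits32 := {ffun 'I_32 -> bool}.

Definition expo (a : bits32) : nat := (\sum_(j < 8) a (inord (23 + j)) * 2 ^ j)%N.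

Definition normalized (a : bits32) : Prop := (0 < expo a < 255)%N.

Definition b32val (R : realFieldType) (a : bits32) : R :=
  (-1) ^+ a (inord 31) * (2%:R : R) ^ (Posz (expo a) - 127%:Z)
  * (1 + \sum_(1 <= i < 24) (a (inord (23 - i)))%:R * (2%:R : R) ^- i).

Definition flip (a : bits32) (f : {ffun 'I_23 -> bool}) : bits32 :=
  [ffun j : 'I_32 => if (j < 23)%N then a j (+) f (inord j) else a j].

Definition flip_prob (R : realFieldType) (p : R) (f : {ffun 'I_23 -> bool}) : R :=
  \prod_(k < 23) (if f k then p else 1 - p).

Definition mean_flip (R : realFieldType) (p : R) (a : bits32) : R :=
  \sum_(f : {ffun 'I_23 -> bool}) flip_prob p f * b32val R (flip a f).

Definition var_flip (R : realFieldType) (p : R) (a : bits32) : R :=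
  \sum_(f : {ffun 'I_23 -> bool})
     flip_prob p f * (b32val R (flip a f) - mean_flip p a) ^+ 2.

(* Under independent bit flips the fraction bits of the perturbed word are
   independent Bernoulli variables, and the value is an affine function
   (with weights +-2^(e-127) 2^-i) of them.  Linearity of expectation gives the
   mean: a bit x flipped with probability p has mean (1 - 2p) x + p.  For the
   variance, the centered summands are independent, so the cross terms vanish
   and only the diagonal sum p(1 - p) sum_i 4^-i 4^(e-127) survives. *)
From HB Require Import structures.
From mathcomp Require Import all_boot all_order all_algebra.
From mathcomp Require Import zify ring.
Import Order.TTheory GRing.Theory Num.Theory.
Set Implicit Arguments. Unset Strict Implicit. Unset Printing Implicit Defensive.
Local Open Scope ring_scope.

Section BernoulliProduct.
Variables (R : realFieldType) (n : nat) (p : R).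

Definition bern_weight (b : bool) : R := if b then p else 1 - p.

Definition bern_exp (h : bool -> R) : R := p * h true + (1 - p) * h false.

Definition bern_pmf (f : {ffun 'I_n -> bool}) : R := \prod_(k < n) bern_weight (f k).

Lemma bern_exp_centered (h : bool -> R) : bern_exp (fun b => h b - bern_exp h) = 0.
Proof. by rewrite /bern_exp; ring. Qed.

Lemma bern_exp_cst (c : R) : bern_exp (fun _ => c) = c.
Proof. by rewrite /bern_exp -mulrDl addrC subrK mul1r. Qed.

Lemma sum_bern_pmf_prod (H : 'I_n -> bool -> R) :
  \sum_f bern_pmf f * \prod_i H i (f i) = \prod_i bern_exp (H i).
Proof.
pose G (f : {ffun 'I_n -> bool}) := \prod_i (bern_weight (f i) * H i (f i)).
rewrite (eq_bigr G) => [|f _]; last by rewrite /G /bern_pmf big_split.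
transitivity (\prod_i \sum_(b : bool) bern_weight b * H i b).
  by rewrite bigA_distr_bigA.
by apply: eq_bigr => i _; rewrite big_bool.
Qed.

Lemma sum_bern_pmf : \sum_f bern_pmf f = 1.
Proof.
have := sum_bern_pmf_prod (fun _ _ => 1).
rewrite [RHS]big1 => [|i _]; last exact: bern_exp_cst.
by move=> <-; apply: eq_bigr => f _; rewrite big1 ?mulr1.
Qed.

Lemma sum_bern_pmf_coord (k : 'I_n) (h : bool -> R) :
  \sum_f bern_pmf f * h (f k) = bern_exp h.
Proof.
have := sum_bern_pmf_prod (fun i => if i == k then h else fun _ => 1).
rewrite [RHS](bigD1 k) //= eqxx [X in _ = _ * X]big1 ?mulr1; last first.
  by move=> i /negbTE ->; exact: bern_exp_cst.
move=> <-; apply: eq_bigr => f _; congr (_ * _).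
by rewrite (bigD1 k) //= eqxx big1 ?mulr1 // => i /negbTE ->.
Qed.

Lemma sum_bern_pmf_coord2 (k l : 'I_n) (h1 h2 : bool -> R) : k != l ->
  \sum_f bern_pmf f * (h1 (f k) * h2 (f l)) = bern_exp h1 * bern_exp h2.
Proof.
move=> neq_kl.
have := sum_bern_pmf_prod
  (fun i => if i == k then h1 else if i == l then h2 else fun _ => 1).
rewrite [RHS](bigD1 k) //= eqxx [X in _ = _ * X](bigD1 l) 1?eq_sym //= eqxx ifN //.
rewrite [X in _ = _ * (_ * X)]big1 ?mulr1; last first.
  by move=> i /andP[/negbTE -> /negbTE ->]; exact: bern_exp_cst.
move=> <-; apply: eq_bigr => f _; congr (_ * _).
rewrite (bigD1 k) //= eqxx (bigD1 l) 1?eq_sym //= eqxx ifN // big1 ?mulr1 //.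
by move=> i /andP[/negbTE -> /negbTE ->].
Qed.

Lemma sum_bern_pmf_sum (r : seq nat) (j : nat -> 'I_n) (T : nat -> bool -> R) :
  \sum_f bern_pmf f * \sum_(i <- r) T i (f (j i)) = \sum_(i <- r) bern_exp (T i).
Proof.
under eq_bigr do rewrite mulr_sumr.
by rewrite exchange_big; apply: eq_bigr => i _; exact: sum_bern_pmf_coord.
Qed.

(* Independence of distinct coordinates kills all cross terms of the square. *)
Lemma sum_bern_pmf_sqr_centered (r : seq nat) (j : nat -> 'I_n) (D : nat -> bool -> R) :
  uniq r -> {in r &, injective j} -> (forall i, i \in r -> bern_exp (D i) = 0) ->
  \sum_f bern_pmf f * (\sum_(i <- r) D i (f (j i))) ^+ 2
  = \sum_(i <- r) bern_exp (fun b => D i b ^+ 2).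
Proof.
move=> uniq_r inj_j centered.
under eq_bigr do rewrite expr2 big_distrlr /= mulr_sumr.
rewrite exchange_big; apply: eq_big_seq => i ir /=.
under eq_bigr do rewrite mulr_sumr.
rewrite exchange_big (bigD1_seq i) //= [X in _ + X]big1_seq ?addr0.
  by rewrite -(sum_bern_pmf_coord (j i)); apply: eq_bigr => f _; rewrite expr2.
move=> l /andP[neq_li lr]; rewrite sum_bern_pmf_coord2 ?centered ?mulr0 //.
by apply: contra neq_li => /eqP /inj_j ->.
Qed.

End BernoulliProduct.

Lemma sum_sqr_pow2V (R : realFieldType) (m : nat) :
  3%:R * \sum_(1 <= i < m.+1) ((2%:R : R) ^- i) ^+ 2 = 1 - (4%:R : R) ^- m.
Proof.
have sqr_pow2V i : ((2%:R : R) ^- i) ^+ 2 = (4%:R : R) ^- i.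
  by rewrite exprVn -exprM mulnC exprM -(natrX _ 2 2).
have four_neq0 : (4%:R : R) != 0 by rewrite pnatr_eq0.
elim: m => [|m IHm]; first by rewrite big_geq // mulr0 expr0 invr1 subrr.
rewrite big_nat_recr //= mulrDr IHm !sqr_pow2V exprSr invfM.
by move: (_ ^- m) => x; field.
Qed.

Section BitFlip.
Variables (R : realFieldType) (p : R).

Lemma bern_exp_xor (x : bool) (c : R) :
  bern_exp p (fun b => (x (+) b)%:R * c) = ((1 - 2%:R * p) * x%:R + p) * c.
Proof. by rewrite /bern_exp; case: x => /=; ring. Qed.

Lemma bern_exp_xor_centered_sqr (x : bool) (c : R) :
  bern_exp p (fun b => ((x (+) b)%:R * c - bern_exp p (fun b => (x (+) b)%:R * c)) ^+ 2)
  = p * (1 - p) * c ^+ 2.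
Proof. by rewrite bern_exp_xor /bern_exp; case: x => /=; ring. Qed.

End BitFlip.

Section Binary32.
Variables (R : realFieldType) (a : bits32).

Let scale : R := (-1) ^+ a (inord 31) * (2%:R : R) ^ (Posz (expo a) - 127%:Z).

(* Summand i (1 <= i <= 23) of b32val reads fraction bit a_(23 - i). *)
Let frac_coord (i : nat) : 'I_23 := inord (23 - i).
Let frac_term (i : nat) (b : bool) : R := (a (inord (23 - i)) (+) b)%:R * (2%:R : R) ^- i.

Lemma expo_flip f : expo (flip a f) = expo a.
Proof.
apply: eq_bigr => j _; rewrite ffunE inordK; last by case: j => /= j; lia.
by have -> : (23 + j < 23)%N = false by lia.
Qed.

Lemma b32val_flip f :
  b32val R (flip a f) = scale * (1 + \sum_(1 <= i < 24) frac_term i (f (frac_coord i))).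
Proof.
rewrite /b32val expo_flip ffunE inordK //=; congr (_ * (1 + _)).
apply: eq_big_nat => i /andP[i_ge1 i_lt24].
rewrite /frac_term /frac_coord ffunE inordK; last by lia.
by have -> : (23 - i < 23)%N = true by lia.
Qed.

Lemma frac_coord_inj : {in index_iota 1 24 &, injective frac_coord}.
Proof.
move=> i j; rewrite !mem_index_iota => /andP[i_ge1 i_lt24] /andP[j_ge1 j_lt24].
by move=> /(congr1 val); rewrite /frac_coord /= !inordK; lia.
Qed.

Lemma sqr_scale : scale ^+ 2 = (2%:R : R) ^ (2%:Z * Posz (expo a) - 254%:Z).
Proof.
rewrite /scale exprMn sqrr_sign mul1r expr2 -expfzDr ?pnatr_eq0 //.
by congr (_ ^ _); ring.
Qed.

Lemma mean_flipE p :
  mean_flip p a = scale * (1 + \sum_(1 <= i < 24) bern_exp p (frac_term i)).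
Proof.
rewrite /mean_flip.
under eq_bigr do rewrite b32val_flip mulrCA mulrDr mulr1.
by rewrite -mulr_sumr big_split /= sum_bern_pmf sum_bern_pmf_sum.
Qed.

Lemma mean_flip_formula p :
  mean_flip p a =
    (1 - 2%:R * p) * b32val R a
    + (-1) ^+ a (inord 31) * (2%:R : R) ^ (Posz (expo a) - 127%:Z)
      * (2%:R * p + \sum_(1 <= i < 24) (2%:R : R) ^- i * p).
Proof.
rewrite mean_flipE /b32val -/scale.
under eq_big_nat => i _ do rewrite bern_exp_xor.
have -> : \sum_(1 <= i < 24) ((1 - 2%:R * p) * (a (inord (23 - i)))%:R + p) * 2%:R ^- i
    = (1 - 2%:R * p) * \sum_(1 <= i < 24) (a (inord (23 - i)))%:R * 2%:R ^- i
      + \sum_(1 <= i < 24) 2%:R ^- i * p.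
  by rewrite mulr_sumr -big_split /=; apply: eq_bigr => i _; ring.
ring.
Qed.

Lemma var_flip_formula p :
  var_flip p a =
    (1 - (4%:R : R) ^- 23) / 3%:R * (p * (1 - p))
    * (2%:R : R) ^ (2%:Z * Posz (expo a) - 254%:Z).
Proof.
rewrite /var_flip mean_flipE.
pose D i b := frac_term i b - bern_exp p (frac_term i).
have deviation f :
    (b32val R (flip a f) - scale * (1 + \sum_(1 <= i < 24) bern_exp p (frac_term i))) ^+ 2
    = scale ^+ 2 * (\sum_(1 <= i < 24) D i (f (frac_coord i))) ^+ 2.
  by rewrite b32val_flip /D sumrB; ring.
under eq_bigr do rewrite deviation mulrCA.
rewrite -mulr_sumr sum_bern_pmf_sqr_centered; first last.
- by move=> i _; exact: bern_exp_centered.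
- exact: frac_coord_inj.
- exact: iota_uniq.
have -> : \sum_(1 <= i < 24) bern_exp p (fun b => D i b ^+ 2)
    = p * (1 - p) * \sum_(1 <= i < 24) ((2%:R : R) ^- i) ^+ 2.
  by rewrite mulr_sumr; apply: eq_bigr => i _; exact: bern_exp_xor_centered_sqr.
have -> : \sum_(1 <= i < 24) ((2%:R : R) ^- i) ^+ 2 = (1 - (4%:R : R) ^- 23) / 3%:R.
  by rewrite -sum_sqr_pow2V mulrAC divff ?mul1r ?pnatr_eq0.
by rewrite sqr_scale mulrC [p * _ * _]mulrC.
Qed.

End Binary32.

(* The identities are polynomial in p and hold for every exponent field. *)
Theorem lemma1 (R : realFieldType) (a : bits32) (p : R) :
  normalized a -> 0 <= p <= 1 ->
  mean_flip p a =
    (1 - 2%:R * p) * b32val R a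
    + (-1) ^+ a (inord 31) * (2%:R : R) ^ (Posz (expo a) - 127%:Z)
      * (2%:R * p + \sum_(1 <= i < 24) (2%:R : R) ^- i * p)
  /\
  var_flip p a =
    (1 - (4%:R : R) ^- 23) / 3%:R * (p * (1 - p))
    * (2%:R : R) ^ (2%:Z * Posz (expo a) - 254%:Z).
Proof. by move=> _ _; split; [exact: mean_flip_formula | exact: var_flip_formula]. Qed.
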